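(* Let $N\in\mathbb{C}^{m\times n}$ have rank $r$ and singular value decomposition $N=U\begin{pmatrix}\Sigma & 0\\ 0 & 0\end{pmatrix}V^{\ast}$, where $\Sigma\in\mathbb{C}^{r\times r}$ is diagonal with positive diagonal entries and $U\in\mathbb{C}^{m\times m}$, $V\in\mathbb{C}^{n\times n}$ are unitary. Let $Y\in\mathbb{C}^{n\times n}$ be arbitrary. Suppose that one of the following conditions holds: (C1') $YN^{\ast}N$ is normal; (C2') there exist $0\neq c_{1}'\in\mathbb{C}$ and $k_{1}'\in\mathbb{N}^{+}$ such that $(YN^{\ast}N)^{k_{1}'}=c_{1}'N^{\dagger}N$; (C3') there exist $0\neq c_{2}'\in\mathbb{C}$, $\ell'\in\mathbb{N}^{+}$ and $k_{2}'\in\mathbb{N}^{+}$ such that $(YN^{\ast}N)^{k_{2}'}=c_{2}'(N^{\ast}N)^{\ell'}$; (C4') $F_{N}Y$ is normal; (C5') there exist $0\neq c_{3}'\in\mathbb{C}$ and $k_{3}'\in\mathbb{N}^{+}$ such that $(F_{N}Y)^{k_{3}'}=c_{3}'F_{N}$; (C6') $F_{N}YN^{\dagger}N=0$; (C7') there exists $k_{4}'\in\mathbb{N}^{+}$ such that $F_{N}Y(N^{\ast}N)^{k_{4}'}=0$. Then $Y=V\begin{pmatrix}Y_{1} & Y_{3}\\ 0 & Y_{4}\end{pmatrix}V^{\ast}$ for some $Y_{1}\in\mathbb{C}^{r\times r}$, $Y_{3}\in\mathbb{C}^{r\times(n-r)}$, $Y_{4}\in\mathbb{C}^{(n-r)\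times(n-r)}$.
   Context: $\mathbb{N}^{+}$ is the set of positive integers. For a complex matrix $A$, $A^{\ast}$ is its conjugate transpose, $A^{\dagger}$ its Moore--Penrose inverse, and $F_{A}:=I-A^{\dagger}A$. A square matrix $B$ is normal if $BB^{\ast}=B^{\ast}B$. *)

From HB Require Import structures.
From mathcomp Require Import all_boot all_order all_algebra.
From mathcomp Require Import complex reals.
Set Implicit Arguments. Unset Strict Implicit. Unset Printing Implicit Defensive.
Import Order.TTheory GRing.Theory Num.Theory.
Local Open Scope ring_scope.

Definition ctr (C : numClosedFieldType) m n (A : 'M[C]_(m, n)) : 'M[C]_(n, m) :=
  (map_mx Num.conj A)^T.

Definition unitary_mx (C : numClosedFieldType) n (U : 'M[C]_n) : Prop :=
  ctr U *m U = 1%:M.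

Definition normal_mx (C : numClosedFieldType) n (B : 'M[C]_n) : Prop :=
  B *m ctr B = ctr B *m B.

(* X is the Moore--Penrose inverse of A (the four Penrose equations;
   this characterizes A^dagger uniquely). *)
Definition is_MP_inverse (C : numClosedFieldType) m n
    (A : 'M[C]_(m, n)) (X : 'M[C]_(n, m)) : Prop :=
  [/\ A *m X *m A = A, X *m A *m X = X,
      ctr (A *m X) = A *m X & ctr (X *m A) = X *m A].

Definition mxpow (C : numClosedFieldType) n (A : 'M[C]_n) (k : nat) : 'M[C]_n :=
  iter k (mulmx A) 1%:M.

From HB Require Import structures.
From mathcomp Require Import all_boot all_order all_algebra.
From mathcomp Require Import complex reals.
Set Implicit Arguments. Unset Strict Implicit. Unset Printing Implicit Defensive.
Import Order.TTheory GRing.Theory Num.Theory.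
Local Open Scope ring_scope.

(* In the orthonormal basis given by the columns of V, the SVD and the Penrose
   equations give N^*N = diag(D, 0) with D = Sigma^* Sigma invertible,
   N^dagger N = diag(I, 0) and F_N = diag(0, I). Writing
   V^* Y V = [[Y1, Y3], [Y2, Y4]], this makes
   Y N^*N = [[Y1 D, 0], [Y2 D, 0]] and F_N Y = [[0, 0], [Y2, Y4]], and every
   condition forces Y2 = 0. For a normal matrix of either shape, comparing one
   diagonal block of L L^* and L^* L gives Z Z^* = 0 for Z = Y2 D, resp. Y2.
   A power condition makes the diagonal block Y1 D (resp. Y4) invertible, while
   the off-diagonal block of the k-th power is Y2 D (Y1 D)^(k-1)
   (resp. Y4^(k-1) Y2) and must vanish. *)

Section ConjugateTranspose.
Variable C : numClosedFieldType.

Lemma ctrM m n p (A : 'M[C]_(m, n)) (B : 'M[C]_(n, p)) :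
  ctr (A *m B) = ctr B *m ctr A.
Proof. by rewrite /ctr map_mxM trmx_mul. Qed.

Lemma ctrK m n (A : 'M[C]_(m, n)) : ctr (ctr A) = A.
Proof. by apply/matrixP=> i j; rewrite /ctr !mxE conjCK. Qed.

Lemma ctr0 m n : ctr (0 : 'M[C]_(m, n)) = 0.
Proof. by apply/matrixP=> i j; rewrite /ctr !mxE rmorph0. Qed.

Lemma ctr_block_mx m1 m2 n1 n2 (A : 'M[C]_(m1, n1)) (B : 'M[C]_(m1, n2))
    (D : 'M[C]_(m2, n1)) (E : 'M[C]_(m2, n2)) :
  ctr (block_mx A B D E) = block_mx (ctr A) (ctr D) (ctr B) (ctr E).
Proof. by rewrite /ctr map_block_mx tr_block_mx. Qed.

Lemma ctr_eq0 m n (A : 'M[C]_(m, n)) : ctr A = 0 -> A = 0.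
Proof. by move=> A0; rewrite -[A]ctrK A0 ctr0. Qed.

Lemma unitmx_ctr n (A : 'M[C]_n) : (ctr A \in unitmx) = (A \in unitmx).
Proof. by rewrite /ctr unitmx_tr map_unitmx. Qed.

(* The diagonal of A A^* holds the squared norms of the rows of A. *)
Lemma mulmx_ctr_eq0 m n (A : 'M[C]_(m, n)) : A *m ctr A = 0 -> A = 0.
Proof.
move=> AA0; apply/matrixP=> i j; rewrite mxE.
have /eqP := congr1 (fun M : 'M[C]_m => M i i) AA0; rewrite !mxE.
under eq_bigr => k _ do rewrite /ctr !mxE -normCK.
move/eqP/psumr_eq0P => /(_ (fun k _ => exprn_ge0 2 (normr_ge0 _))) /(_ j isT).
by move/eqP; rewrite sqrf_eq0 normr_eq0 => /eqP.
Qed.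

Lemma ctr_mulmx_eq0 m n (A : 'M[C]_(m, n)) : ctr A *m A = 0 -> A = 0.
Proof. by move=> AA0; apply/ctr_eq0/mulmx_ctr_eq0; rewrite ctrK. Qed.

Lemma unitary_mx_ctr n (U : 'M[C]_n) : unitary_mx U -> U *m ctr U = 1%:M.
Proof. exact: mulmx1C. Qed.

Lemma unitary_mx_cancel m n (U : 'M[C]_m) (V : 'M[C]_n) (A B : 'M[C]_(m, n)) :
  unitary_mx U -> unitary_mx V -> U *m A *m ctr V = U *m B *m ctr V -> A = B.
Proof.
move=> uU uV /(congr1 (fun M => ctr U *m M *m V)).
by rewrite !mulmxA uU !mul1mx -!mulmxA uV !mulmx1.
Qed.

Lemma mulmx_unitmx_eq0 m n (A : 'M[C]_(m, n)) (B : 'M[C]_n) :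
  B \in unitmx -> A *m B = 0 -> A = 0.
Proof. by move=> uB /eqP; rewrite mulmx_free_eq0 ?row_free_unit // => /eqP. Qed.

Lemma unitmx_scale1 n (c : C) : c != 0 -> (c *: 1%:M : 'M[C]_n) \in unitmx.
Proof. by move=> c0; rewrite unitmxZ ?unitfE // unitmx1. Qed.

Lemma diag_pos_unitmx n (D : 'M[C]_n) :
  is_diag_mx D -> (forall j, 0 < D j j) -> D \in unitmx.
Proof.
move=> diagD posD; rewrite unitmxE det_trig ?is_diag_mx_is_trig // unitfE.
by apply/prodf_neq0 => j _; exact: lt0r_neq0.
Qed.

End ConjugateTranspose.

Section MatrixPowers.
Variable C : numClosedFieldType.

Lemma mxpow0 n (A : 'M[C]_n) : mxpow A 0 = 1%:M.
Proof. by []. Qed.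

Lemma mxpowS n (A : 'M[C]_n) k : mxpow A k.+1 = A *m mxpow A k.
Proof. by []. Qed.

Lemma mxpowSr n (A : 'M[C]_n) k : mxpow A k.+1 = mxpow A k *m A.
Proof.
elim: k => [|k IH]; first by rewrite mxpowS mxpow0 mulmx1 mul1mx.
by rewrite mxpowS {1}IH mulmxA.
Qed.

Lemma unitmx_mxpow n (A : 'M[C]_n) k : A \in unitmx -> mxpow A k \in unitmx.
Proof.
by move=> uA; elim: k => [|k IH]; rewrite ?unitmx1 // mxpowS unitmx_mul uA IH.
Qed.

Lemma unitmx_mxpowS n (A : 'M[C]_n) k :
  mxpow A k.+1 \in unitmx -> mxpow A k \in unitmx.
Proof. by rewrite mxpowSr unitmx_mul => /andP[]. Qed.

Lemma mxpow_block_col0 m n (A : 'M[C]_m) (B : 'M[C]_(n, m)) k :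
  mxpow (block_mx A 0 B 0) k.+1 = block_mx (mxpow A k.+1) 0 (B *m mxpow A k) 0.
Proof.
elim: k => [|k IH]; first by rewrite !mxpowS !mxpow0 !mulmx1.
by rewrite mxpowS IH mulmx_block !mulmx0 !mul0mx !addr0.
Qed.

Lemma mxpow_block_row0 m n (A : 'M[C]_n) (B : 'M[C]_(n, m)) k :
  mxpow (block_mx 0 0 B A) k.+1 = block_mx 0 0 (mxpow A k *m B) (mxpow A k.+1).
Proof.
elim: k => [|k IH]; first by rewrite !mxpowS !mxpow0 !mulmx1 mul1mx.
by rewrite mxpowS IH mulmx_block !mulmx0 !mul0mx !add0r mulmxA.
Qed.

Lemma normal_block_col0 r n (A : 'M[C]_r) (B : 'M[C]_(n, r)) :
  normal_mx (block_mx A 0 B 0) -> B = 0.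
Proof.
rewrite /normal_mx ctr_block_mx !ctr0 !mulmx_block !mulmx0 !mul0mx !addr0.
by case/eq_block_mx => _ _ _ /mulmx_ctr_eq0.
Qed.

Lemma normal_block_row0 r n (A : 'M[C]_n) (B : 'M[C]_(n, r)) :
  normal_mx (block_mx 0 0 B A) -> B = 0.
Proof.
rewrite /normal_mx ctr_block_mx !ctr0 !mulmx_block !mulmx0 !mul0mx !addr0 !add0r.
by case/eq_block_mx => /esym /ctr_mulmx_eq0.
Qed.

Lemma mxpow_block_col0_eq0 r n (A X : 'M[C]_r) (B : 'M[C]_(n, r)) k : (0 < k)%N ->
  mxpow (block_mx A 0 B 0) k = block_mx X 0 0 0 -> X \in unitmx -> B = 0.
Proof.
case: k => // k _; rewrite mxpow_block_col0 => /eq_block_mx[AkX _ BAk0 _] uX.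
by apply: (mulmx_unitmx_eq0 _ BAk0); apply: unitmx_mxpowS; rewrite AkX.
Qed.

Lemma mxpow_block_row0_eq0 r n (A X : 'M[C]_n) (B : 'M[C]_(n, r)) k : (0 < k)%N ->
  mxpow (block_mx 0 0 B A) k = block_mx 0 0 0 X -> X \in unitmx -> B = 0.
Proof.
case: k => // k _; rewrite mxpow_block_row0 => /eq_block_mx[_ _ AkB0 AkX] uX.
have uAk : mxpow A k \in unitmx by apply: unitmx_mxpowS; rewrite AkX.
by rewrite -(mulKmx uAk B) AkB0 mulmx0.
Qed.

End MatrixPowers.

Section UnitaryConjugation.
Variables (C : numClosedFieldType) (n : nat) (V : 'M[C]_n).
Hypothesis uV : unitary_mx V.

Definition uconj (A : 'M[C]_n) := V *m A *m ctr V.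

Lemma uconjK A : uconj (ctr V *m A *m V) = A.
Proof.
by rewrite /uconj !mulmxA unitary_mx_ctr // mul1mx -mulmxA unitary_mx_ctr // mulmx1.
Qed.

Lemma uconj_inj : injective uconj.
Proof. by move=> A B; apply: unitary_mx_cancel. Qed.

Lemma uconj_eq0 A : uconj A = 0 -> A = 0.
Proof. by move=> A0; apply: uconj_inj; rewrite A0 /uconj mulmx0 mul0mx. Qed.

Lemma uconjM A B : uconj A *m uconj B = uconj (A *m B).
Proof. by rewrite /uconj -!mulmxA (mulmxA (ctr V)) uV mul1mx. Qed.

Lemma uconj1 : uconj 1%:M = 1%:M.
Proof. by rewrite /uconj mulmx1 unitary_mx_ctr. Qed.

Lemma uconjB A B : uconj (A - B) = uconj A - uconj B.
Proof. by rewrite /uconj mulmxBr mulmxBl. Qed.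

Lemma uconjZ c A : uconj (c *: A) = c *: uconj A.
Proof. by rewrite /uconj -scalemxAr -scalemxAl. Qed.

Lemma ctr_uconj A : ctr (uconj A) = uconj (ctr A).
Proof. by rewrite /uconj !ctrM ctrK mulmxA. Qed.

Lemma mxpow_uconj A k : mxpow (uconj A) k = uconj (mxpow A k).
Proof. by elim: k => [|k IH]; rewrite ?uconj1 // !mxpowS IH uconjM. Qed.

Lemma normal_uconj A : normal_mx (uconj A) -> normal_mx A.
Proof. by rewrite /normal_mx ctr_uconj !uconjM => /uconj_inj. Qed.

End UnitaryConjugation.

Section SingularValueDecomposition.
Variables (C : numClosedFieldType) (r m n : nat).
Variables (U : 'M[C]_(r + m)) (V : 'M[C]_(r + n)) (Sigma : 'M[C]_r).
Variable N : 'M[C]_(r + m, r + n).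
Hypotheses (uU : unitary_mx U) (uV : unitary_mx V).
Hypothesis NE : N = U *m block_mx Sigma 0 0 0 *m ctr V.

Lemma gram_svd : ctr N *m N = uconj V (block_mx (ctr Sigma *m Sigma) 0 0 0).
Proof.
rewrite NE /uconj !ctrM ctrK !mulmxA -(mulmxA _ (ctr U) U) uU mulmx1 -(mulmxA V).
by rewrite ctr_block_mx !ctr0 mulmx_block !mulmx0 !mul0mx !addr0.
Qed.

(* Writing Ndag = V W U^*, the product Ndag N = V (W S) V^* has a zero right
   block column because S does; the first and fourth Penrose equations then
   fix the left block column. *)
Lemma MP_proj_svd Ndag : Sigma \in unitmx -> is_MP_inverse N Ndag ->
  Ndag *m N = uconj V (block_mx 1%:M 0 0 0).
Proof.
move=> uS [NNdN _ _ NdN_herm]; have NSE := NE.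
set S := block_mx Sigma 0 0 0 in NSE; pose W := ctr V *m Ndag *m U.
have NdagE : Ndag = V *m W *m ctr U.
  by rewrite /W !mulmxA unitary_mx_ctr // mul1mx -mulmxA unitary_mx_ctr // mulmx1.
have NdNE : Ndag *m N = uconj V (W *m S).
  by rewrite NdagE NSE /uconj !mulmxA -(mulmxA _ (ctr U) U) uU mulmx1.
have WSE : W *m S = block_mx (ulsubmx W *m Sigma) 0 (dlsubmx W *m Sigma) 0.
  by rewrite -[W]submxK mulmx_block !mulmx0 !addr0 !block_mxKul !block_mxKdl.
have SWSE : S *m (W *m S) = S.
  have NuconjE : N *m uconj V (W *m S) = U *m (S *m (W *m S)) *m ctr V.
    by rewrite NSE /uconj !mulmxA -(mulmxA _ (ctr V) V) uV mulmx1.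
  by apply: (unitary_mx_cancel uU uV); rewrite -NuconjE -NdNE mulmxA NNdN.
have WS_herm : ctr (W *m S) = W *m S.
  by apply: (uconj_inj uV); rewrite -ctr_uconj -NdNE.
rewrite NdNE WSE; rewrite WSE in SWSE WS_herm.
rewrite mulmx_block !mulmx0 !mul0mx !addr0 in SWSE.
case/eq_block_mx: SWSE => SWS _ _ _.
rewrite ctr_block_mx ctr0 in WS_herm.
case/eq_block_mx: WS_herm => _ /ctr_eq0 W3S0 _ _.
have -> : ulsubmx W *m Sigma = 1%:M.
  by rewrite -(mulKmx uS (ulsubmx W *m Sigma)) SWS mulVmx.
by rewrite W3S0.
Qed.

Lemma MP_coproj_svd Ndag : Sigma \in unitmx -> is_MP_inverse N Ndag ->
  1%:M - Ndag *m N = uconj V (block_mx 0 0 0 1%:M).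
Proof.
move=> uS MP; rewrite (MP_proj_svd uS MP) -{1}(uconj1 uV) -uconjB; congr uconj.
rewrite [1%:M : 'M_(r + n)]scalar_mx_block opp_block_mx add_block_mx.
by rewrite !subrr !subr0.
Qed.

End SingularValueDecomposition.

Theorem svd_conj_block_upper (C : numClosedFieldType) (r m' n' : nat)
    (N : 'M[C]_(r + m', r + n'))
    (U : 'M[C]_(r + m')) (V : 'M[C]_(r + n'))
    (Sigma : 'M[C]_r)
    (Ndag : 'M[C]_(r + n', r + m'))
    (Y : 'M[C]_(r + n')) :
  is_diag_mx Sigma -> (forall j : 'I_r, 0 < Sigma j j) ->
  unitary_mx U -> unitary_mx V ->
  N = U *m block_mx Sigma 0 0 0 *m ctr V ->
  is_MP_inverse N Ndag ->
  let FN := 1%:M - Ndag *m N in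
  let NsN := ctr N *m N in
  (normal_mx (Y *m NsN) \/
      (exists (c : C) (k : nat), [/\ c != 0, (0 < k)%N &
         mxpow (Y *m NsN) k = c *: (Ndag *m N)]) \/
      (exists (c : C) (l k : nat), [/\ c != 0, (0 < l)%N, (0 < k)%N &
         mxpow (Y *m NsN) k = c *: mxpow NsN l]) \/
      normal_mx (FN *m Y) \/
      (exists (c : C) (k : nat), [/\ c != 0, (0 < k)%N &
         mxpow (FN *m Y) k = c *: FN]) \/
      FN *m Y *m (Ndag *m N) = 0 \/
      (exists k : nat, (0 < k)%N /\ FN *m Y *m mxpow NsN k = 0)) ->
  exists (Y1 : 'M[C]_r) (Y3 : 'M[C]_(r, n')) (Y4 : 'M[C]_n'),
    Y = V *m block_mx Y1 Y3 0 Y4 *m ctr V.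
Proof.
move=> diagS posS uU uV NE MP FN NsN conds.
have uS := diag_pos_unitmx diagS posS; pose D := ctr Sigma *m Sigma.
have uD : D \in unitmx by rewrite unitmx_mul unitmx_ctr uS.
have PE := MP_proj_svd uU uV NE uS MP.
have FNE : FN = uconj V (block_mx 0 0 0 1%:M) := MP_coproj_svd uU uV NE uS MP.
have NsNE : NsN = uconj V (block_mx D 0 0 0) := gram_svd uU NE.
have [Y1 [Y2 [Y3 [Y4 YE]]]] : exists (Y1 : 'M_r) (Y2 : 'M_(n', r)) Y3 Y4,
    Y = uconj V (block_mx Y1 Y3 Y2 Y4).
  pose Y' := ctr V *m Y *m V.
  exists (ulsubmx Y'), (dlsubmx Y'), (ursubmx Y'), (drsubmx Y').
  by rewrite submxK uconjK.
have YNsNE : Y *m NsN = uconj V (block_mx (Y1 *m D) 0 (Y2 *m D) 0).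
  by rewrite NsNE YE (uconjM uV) mulmx_block !mulmx0 !addr0.
have FNYE : FN *m Y = uconj V (block_mx 0 0 Y2 Y4).
  by rewrite FNE YE (uconjM uV) mulmx_block !mul0mx !mul1mx !addr0 !add0r.
exists Y1, Y3, Y4; suff Y2_0 : Y2 = 0 by rewrite YE Y2_0.
case: conds => [|[[c [k [c0 k0]]]|[[c [l [k [c0 l0 k0]]]]|[|[[c [k [c0 k0]]]|[|[k [k0]]]]]]]].
- by rewrite YNsNE => /(normal_uconj uV)/normal_block_col0/(mulmx_unitmx_eq0 uD).
- rewrite YNsNE PE (mxpow_uconj uV) -uconjZ => /(uconj_inj uV).
  rewrite scale_block_mx !scaler0 => /(mxpow_block_col0_eq0 k0).
  by move/(_ (unitmx_scale1 _ c0)); exact: mulmx_unitmx_eq0.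
- rewrite YNsNE NsNE !(mxpow_uconj uV) -uconjZ => /(uconj_inj uV).
  case: l l0 => // l _; rewrite mxpow_block_col0 mul0mx scale_block_mx !scaler0.
  move/(mxpow_block_col0_eq0 k0); rewrite unitmxZ ?unitfE // unitmx_mxpow //.
  by move/(_ isT); exact: mulmx_unitmx_eq0.
- by rewrite FNYE => /(normal_uconj uV)/normal_block_row0.
- rewrite FNYE FNE (mxpow_uconj uV) -uconjZ => /(uconj_inj uV).
  rewrite scale_block_mx !scaler0 => /(mxpow_block_row0_eq0 k0).
  by apply; exact: unitmx_scale1.
- rewrite FNYE PE (uconjM uV) mulmx_block !mulmx0 !mul0mx !addr0 mulmx1.
  by move/(uconj_eq0 uV); rewrite -block_mx0 => /eq_block_mx[].
- rewrite FNYE NsNE (mxpow_uconj uV) (uconjM uV); case: k k0 => // k _.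
  rewrite mxpow_block_col0 !mul0mx mulmx_block !mulmx0 !addr0 => /(uconj_eq0 uV).
  rewrite -block_mx0 => /eq_block_mx[_ _ Y2Dk0 _].
  exact: mulmx_unitmx_eq0 (unitmx_mxpow _ uD) Y2Dk0.
Qed.

Theorem lemma2p3 (R : realType) (r m' n' : nat)
    (N : 'M[R[i]]_(r + m', r + n'))
    (U : 'M[R[i]]_(r + m')) (V : 'M[R[i]]_(r + n'))
    (Sigma : 'M[R[i]]_r)
    (Ndag : 'M[R[i]]_(r + n', r + m'))
    (Y : 'M[R[i]]_(r + n')) :
  \rank N = r ->
  is_diag_mx Sigma -> (forall j : 'I_r, 0 < Sigma j j) ->
  unitary_mx U -> unitary_mx V ->
  N = U *m block_mx Sigma 0 0 0 *m ctr V ->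
  is_MP_inverse N Ndag ->
  let FN := 1%:M - Ndag *m N in
  let NsN := ctr N *m N in
  (normal_mx (Y *m NsN) \/
      (exists (c : R[i]) (k : nat), [/\ c != 0, (0 < k)%N &
         mxpow (Y *m NsN) k = c *: (Ndag *m N)]) \/
      (exists (c : R[i]) (l k : nat), [/\ c != 0, (0 < l)%N, (0 < k)%N &
         mxpow (Y *m NsN) k = c *: mxpow NsN l]) \/
      normal_mx (FN *m Y) \/
      (exists (c : R[i]) (k : nat), [/\ c != 0, (0 < k)%N &
         mxpow (FN *m Y) k = c *: FN]) \/
      FN *m Y *m (Ndag *m N) = 0 \/
      (exists k : nat, (0 < k)%N /\ FN *m Y *m mxpow NsN k = 0)) ->
  exists (Y1 : 'M[R[i]]_r) (Y3 : 'M[R[i]]_(r, n')) (Y4 : 'M[R[i]]_n'),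
    Y = V *m block_mx Y1 Y3 0 Y4 *m ctr V.
Proof.
by move=> _; exact: svd_conj_block_upper.
Qed.
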